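(* Let $q=p^e$ with $p$ an odd prime and $e\ge1$, let $m\ge3$ be odd, $D=\{x\in\mathbb{F}_{q^m}:\mathrm{Tr}_{q^m/q}(x^2)=0\}=\{d_1,\dots,d_n\}$, and $\overline{\mathcal{C}_D}=\{(\mathrm{Tr}_{q^m/q}(bx)+c)_{x\in D}:b\in\mathbb{F}_{q^m},c\in\mathbb{F}_q\}$. Let $\alpha$ generate $\mathbb{F}_{q^m}^*$ and let $G_2$ be the generator matrix of $\overline{\mathcal{C}_D}$ whose first row is $(1,\dots,1)$, second row $(\mathrm{Tr}_{q^m/q}(d_j))_j$, third row $(\mathrm{Tr}_{q^m/q}(\alpha d_j)+1)_j$, and $(i+2)$-th row $(\mathrm{Tr}_{q^m/q}(\alpha^id_j))_j$ for $2\le i\le m-1$. Let $\overline{\mathcal{C}_D}'$ be the code generated by $[I_{m+1}:G_2]$. Then $\overline{\mathcal{C}_D}$ is an almost optimally or optimally extendable code, i.e. $0\le d(\overline{\mathcal{C}_D}^{\perp})-d(\overline{\mathcal{C}_D}'^{\perp})\le1$.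
   Context: $d(\cdot)$ denotes minimum distance. For a linear code $\mathcal{C}$ with $k\times n$ generator matrix $G$ and $\mathcal{C}'$ generated by $[I_k:G]$, $\mathcal{C}$ is optimally extendable if $d(\mathcal{C}'^{\perp})=d(\mathcal{C}^{\perp})$ and almost optimally extendable if $d(\mathcal{C}'^{\perp})=d(\mathcal{C}^{\perp})-1$. *)

(* All objects live inside the finite field L = F_{q^m};
   F_q is the subfield {x | x^q = x}. *)
From HB Require Import structures.
From mathcomp Require Import all_boot all_order all_algebra.
Unset Printing Implicit Defensive.
Import GRing.Theory.
Local Open Scope ring_scope.

Definition trq (L : finFieldType) (q m : nat) (x : L) : L :=
  \sum_(i < m) x ^+ (q ^ i).

Definition inFq (L : finFieldType) (q : nat) (x : L) : bool := x ^+ q == x.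

Definition wt (L : finFieldType) (n : nat) (v : 'rV[L]_n) : nat :=
  #|[set j : 'I_n | v 0 j != 0]|.

(* minimum distance: least weight of a nonzero codeword
   (convention: n if there is none) *)
Definition mindist (L : finFieldType) (n : nat) (C : {set 'rV[L]_n}) : nat :=
  \big[minn/n]_(c in C | c != 0) wt L n c.

Definition dualq (L : finFieldType) (q n : nat) (C : {set 'rV[L]_n}) :
  {set 'rV[L]_n} :=
  [set y : 'rV[L]_n | [forall j, inFq L q (y 0 j)] &&
                      [forall c in C, y *m c^T == 0]].

Definition span_code (L : finFieldType) (q k n : nat) (M : 'M[L]_(k, n)) :
  {set 'rV[L]_n} :=
  [set v : 'rV[L]_n | [exists u : 'rV[L]_k,
      [forall i, inFq L q (u 0 i)] && (v == u *m M)]].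

Definition Dset (L : finFieldType) (q m : nat) : {set L} :=
  [set x : L | trq L q m (x ^+ 2) == 0].

Definition dj (L : finFieldType) (q m : nat) (j : 'I_#|Dset L q m|) : L :=
  @enum_val L (mem (Dset L q m)) j.

Definition CDbar (L : finFieldType) (q m : nat) : {set 'rV[L]_#|Dset L q m|} :=
  [set v | [exists b : L, exists c : L,
      inFq L q c && (v == \row_j (trq L q m (b * dj L q m j) + c))]].

(* the generator matrix G_2 (rows indexed 0..m) *)
Definition G2 (L : finFieldType) (q m : nat) (alpha : L) :
  'M[L]_(m.+1, #|Dset L q m|) :=
  \matrix_(i < m.+1, j < #|Dset L q m|)
    if (i : nat) == 0%N then 1
    else if (i : nat) == 1%N then trq L q m (dj L q m j)
    else if (i : nat) == 2%N then trq L q m (alpha * dj L q m j) + 1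
    else trq L q m (alpha ^+ (i.-1) * dj L q m j).

From HB Require Import structures.
From mathcomp Require Import all_boot all_order all_algebra finfield.
Import Order.TTheory GRing.Theory.
Local Open Scope ring_scope.
Set Implicit Arguments.
Unset Strict Implicit.

(* Every column of [I : G_2] has a nonzero entry (the first row of G_2 is all
   ones), so the dual of the extended code has no word of weight 1: d(C'^perp) >= 2.
   Padding a dual word of C_D with zeros gives a dual word of C' of the same weight,
   so d(C'^perp) <= d(C^perp).  Finally C^perp has a word of weight 3: if x <> 0 and
   Tr(x^2) = 0 then 0, x, -x lie in D and the word 1, 1, -2 at x, -x, 0 is orthogonal
   to every (Tr(bd) + c)_d, as Tr is additive.  Such an x exists: the trace has a
   nonzero kernel element k, and k or alpha^s k is a square, where the norm alpha^s,
   s = (q^m - 1)/(q - 1), lies in F_q. *)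

Lemma card_expr_fixed_le (F : finFieldType) n :
  (1 < n)%N -> (#|[set z : F | z ^+ n == z]| <= n)%N.
Proof.
move=> n_gt1; pose P : {poly F} := 'X^n - 'X.
have sizeP : size P = n.+1.
  by rewrite size_polyDl ?size_polyXn // size_polyN size_polyX ltnS.
rewrite cardE -ltnS -sizeP max_poly_roots ?enum_uniq //.
  by rewrite -size_poly_eq0 sizeP.
by apply/allP => z; rewrite mem_enum inE rootE !hornerE subr_eq0.
Qed.

Lemma pchar_nat_pexp (R : nzRingType) p e :
  p \in [pchar R] -> [pchar R].-nat (p ^ e)%N.
Proof.
move=> pcharRp; have p_prime := pcharf_prime pcharRp.
by rewrite (eq_pnat _ (pcharf_eq pcharRp)) pnatX pnat_id.
Qed.

Lemma neq_opp_odd_pchar (L : fieldType) p (x : L) :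
  p \in [pchar L] -> odd p -> x != 0 -> x != - x.
Proof.
move=> pcharLp odd_p x_neq0.
have two_neq0 : (2%:R : L) != 0.
  rewrite -(dvdn_pcharf pcharLp) dvdn_prime2 ?(pcharf_prime pcharLp) //.
  by apply: contraL odd_p => /eqP->.
apply: contra_neq x_neq0 => x_eq.
have : 2%:R * x == 0 by rewrite mulr_natl mulr2n {1}x_eq addNr.
by rewrite mulf_eq0 (negbTE two_neq0) => /eqP.
Qed.

Section Trace.
Context {L : finFieldType} {q m : nat}.
Local Notation tr := (trq L q m).
Local Notation inFq := (inFq L q).

Lemma inFq0 : (0 < q)%N -> inFq 0.
Proof. by move=> q_gt0; rewrite /inFq expr0n gtn_eqF. Qed.

Lemma inFq1 : inFq 1.
Proof. by rewrite /inFq expr1n. Qed.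

Lemma trqZ_Fq a x : inFq a -> tr (a * x) = a * tr x.
Proof.
move=> /eqP aq; have aqi i : a ^+ (q ^ i) = a.
  by elim: i => [|i IHi]; rewrite ?expr1 // expnS mulnC exprM IHi aq.
by rewrite /trq mulr_sumr; apply: eq_bigr => i _; rewrite exprMn aqi.
Qed.

Hypothesis pchar_q : [pchar L].-nat q.

Lemma pchar_nat_qexp i : [pchar L].-nat (q ^ i)%N.
Proof. by rewrite pnatX pchar_q. Qed.

Lemma inFq0_pchar : inFq 0.
Proof. by case/andP: pchar_q => q_gt0 _; apply: inFq0. Qed.

Lemma trqD x y : tr (x + y) = tr x + tr y.
Proof.
by rewrite /trq -big_split; apply: eq_bigr => i _; rewrite exprDn_pchar ?pchar_nat_qexp.
Qed.

Lemma trqN x : tr (- x) = - tr x.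
Proof.
by rewrite /trq -sumrN; apply: eq_bigr => i _; rewrite exprNn_pchar ?pchar_nat_qexp.
Qed.

Lemma trq0 : tr 0 = 0.
Proof. by apply: (addrI (tr 0)); rewrite -trqD !addr0. Qed.

Lemma inFqD x y : inFq x -> inFq y -> inFq (x + y).
Proof. by rewrite /inFq exprDn_pchar // => /eqP-> /eqP->. Qed.

Lemma inFqN x : inFq x -> inFq (- x).
Proof. by rewrite /inFq exprNn_pchar // => /eqP->. Qed.

Lemma inFq_nat n : inFq n%:R.
Proof.
by elim: n => [|n IHn]; rewrite ?inFq0_pchar // mulrS inFqD ?inFq1.
Qed.

Hypothesis cardL : #|L| = (q ^ m)%N.

Lemma inFq_trq x : (0 < m)%N -> inFq (tr x).
Proof.
case: m cardL => // m' cardL' _; rewrite /inFq /trq.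
have /eqP q0 := inFq0_pchar.
rewrite (big_morph (fun z => z ^+ q) (fun a b => exprDn_pchar a b pchar_q) q0).
under eq_bigr => i _ do rewrite -exprM -expnSr.
rewrite [X in X == _]big_ord_recr [X in _ == X]big_ord_recl /= -cardL' expf_card.
by rewrite expn0 expr1 addrC.
Qed.

Lemma trq_ker_neq0 : (1 < q)%N -> (1 < m)%N -> exists2 k : L, k != 0 & tr k = 0.
Proof.
move=> q_gt1 m_gt1.
have /injectivePn[x [y neq_xy tr_xy]] : ~~ injectiveb tr.
  apply/injectiveP => /card_imset card_img.
  have : (#|L| <= q)%N.
    rewrite -cardsT -(card_img [set: L]) (leq_trans _ (card_expr_fixed_le L q_gt1)) //.
    rewrite subset_leq_card //; apply/subsetP => _ /imsetP[z _ ->].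
    by rewrite inE; apply: inFq_trq; apply: ltnW.
  by rewrite cardL leqNgt -{1}[q]expn1 ltn_exp2l // m_gt1.
by exists (x - y); rewrite ?subr_eq0 // trqD trqN tr_xy subrr.
Qed.

End Trace.

Lemma odd_geom_sum q k : odd q -> odd (\sum_(i < k) q ^ i)%N = odd k.
Proof.
move=> odd_q; elim: k => [|k IHk]; first by rewrite big_ord0.
by rewrite big_ord_recr /= oddD IHk oddX odd_q orbT addbT.
Qed.

(* s = (q^m - 1)/(q - 1) is odd, so one of alpha^i, alpha^(i + s) has an even
   exponent. *)
Lemma Fq_multiple_square (L : finFieldType) (alpha : L) q m k :
  (#|L|.-1).-primitive_root alpha -> #|L| = (q ^ m)%N -> odd q -> odd m -> k != 0 ->
  exists2 x : L, x != 0 & exists2 a : L, inFq L q a & x ^+ 2 = a * k.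
Proof.
move=> alpha_prim cardL odd_q odd_m k_neq0; pose s := (\sum_(i < m) q ^ i)%N.
have order_s : #|L|.-1 = (q.-1 * s)%N by rewrite cardL predn_exp.
have alpha_neq0 : alpha != 0.
  apply: contra_eq_neq (prim_expr_order alpha_prim) => ->.
  by rewrite expr0n gtn_eqF ?(prim_order_gt0 alpha_prim) // eq_sym oner_eq0.
have k_order : k ^+ #|L|.-1 = 1.
  apply: (mulfI k_neq0); rewrite -exprS prednK ?expf_card ?mulr1 //.
  by apply/card_gt0P; exists 0.
have [i ->] := prim_rootP alpha_prim k_order.
have norm_Fq : inFq L q (alpha ^+ s).
  apply/eqP; rewrite -exprM -[q in (s * q)%N](prednK (odd_gt0 odd_q)) mulnS mulnC.
  by rewrite -order_s exprD (prim_expr_order alpha_prim) mulr1.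
have odd_s : odd s by rewrite odd_geom_sum.
case: (boolP (odd i)) => [odd_i | even_i].
- exists (alpha ^+ ((i + s)./2)); first by rewrite expf_neq0.
  exists (alpha ^+ s) => //; rewrite -exprM muln2.
  move: (odd_double_half (i + s)); rewrite oddD odd_i odd_s /= add0n => ->.
  by rewrite exprD mulrC.
- exists (alpha ^+ (i./2)); first by rewrite expf_neq0.
  exists 1; rewrite ?inFq1 // mul1r -exprM muln2.
  by move: (odd_double_half i); rewrite (negbTE even_i) add0n => ->.
Qed.

Lemma exists_trq_sqr_eq0 (L : finFieldType) (alpha : L) q m :
  [pchar L].-nat q -> (1 < q)%N -> odd q -> (1 < m)%N -> odd m ->
  #|L| = (q ^ m)%N -> (#|L|.-1).-primitive_root alpha ->
  exists2 x : L, x != 0 & trq L q m (x ^+ 2) = 0.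
Proof.
move=> pchar_q q_gt1 odd_q m_gt1 odd_m cardL alpha_prim.
have [k k_neq0 trk] := trq_ker_neq0 pchar_q cardL q_gt1 m_gt1.
have [x x_neq0 [a a_Fq sq_x]] := Fq_multiple_square alpha_prim cardL odd_q odd_m k_neq0.
by exists x; rewrite // sq_x trqZ_Fq // trk mulr0.
Qed.

Section Codes.
Variable L : finFieldType.

Lemma mindist_le_wt n (C : {set 'rV[L]_n}) c :
  c \in C -> c != 0 -> (mindist L n C <= wt L n c)%N.
Proof.
by move=> cC c_neq0; rewrite /mindist -minEnat -leEnat; apply: bigmin_le_cond; rewrite cC.
Qed.

Lemma leq_mindist n (C : {set 'rV[L]_n}) b : (b <= n)%N ->
  (forall c, c \in C -> c != 0 -> (b <= wt L n c)%N) -> (b <= mindist L n C)%N.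
Proof.
move=> b_le_n wtC; rewrite /mindist -minEnat -leEnat.
by apply: le_bigmin => // c /andP[]; apply: wtC.
Qed.

Lemma wt_le n (y : 'rV[L]_n) : (wt L n y <= n)%N.
Proof. by rewrite -[n in (_ <= n)%N]card_ord max_card. Qed.

Lemma wt_row_mx0 k n (y : 'rV[L]_n) : wt L (k + n) (row_mx (0 : 'rV_k) y) = wt L n y.
Proof.
rewrite /wt -!sum1dep_card big_split_ord /= big1 ?add0n => [|i]; last first.
  by rewrite row_mxEl mxE eqxx.
by apply: eq_bigl => i; rewrite row_mxEr.
Qed.

Variable q : nat.
Hypothesis q_gt0 : (0 < q)%N.

Lemma dualq_row_mx0 r k n (C : {set 'rV[L]_n}) (A : 'M[L]_(r, k)) (G : 'M[L]_(r, n)) y :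
  (forall i, row i G \in C) -> y \in dualq L q n C ->
  row_mx 0 y \in dualq L q (k + n) (span_code L q r (k + n) (row_mx A G)).
Proof.
move=> rowsG_C; rewrite !inE => /andP[/forallP y_Fq /forall_inP y_orth].
apply/andP; split.
  apply/forallP => j; rewrite mxE; case: splitP => j' _; last exact: y_Fq.
  by rewrite mxE inFq0.
have yG : y *m G^T = 0.
  apply/rowP => i; have /eqP/rowP/(_ 0) := y_orth _ (rowsG_C i); rewrite !mxE => orth_i.
  by rewrite -[RHS]orth_i; apply: eq_bigr => j _; rewrite !mxE.
apply/forall_inP => c; rewrite inE => /existsP[u /andP[_ /eqP ->]].
by rewrite trmx_mul mulmxA tr_row_mx mul_row_col mul0mx add0r yG mul0mx.
Qed.

Lemma mindist_dualq_row_mx0_le r k n (C : {set 'rV[L]_n}) (A : 'M[L]_(r, k))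
    (G : 'M[L]_(r, n)) y :
  (forall i, row i G \in C) -> y \in dualq L q n C -> y != 0 ->
  (mindist L _ (dualq L q _ (span_code L q r (k + n) (row_mx A G)))
     <= mindist L n (dualq L q n C))%N.
Proof.
move=> rowsG_C yC y_neq0.
have lift_wt z : z \in dualq L q n C -> z != 0 ->
    (mindist L _ (dualq L q _ (span_code L q r (k + n) (row_mx A G))) <= wt L n z)%N.
  move=> zC z_neq0; rewrite -(wt_row_mx0 k) mindist_le_wt ?row_mx_eq0 ?eqxx //.
  exact: dualq_row_mx0.
by apply: leq_mindist => //; apply: leq_trans (lift_wt _ yC y_neq0) (wt_le _).
Qed.

Lemma dualq_span_wt_gt1 k n (M : 'M[L]_(k, n)) z :
  (forall j, exists i, M i j != 0) -> z \in dualq L q n (span_code L q k n M) ->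
  z != 0 -> (1 < wt L n z)%N.
Proof.
move=> cols_M; rewrite inE => /andP[_ /forall_inP z_orth] z_neq0.
have [j z_j] : exists j, z 0 j != 0.
  apply/existsP; apply: contraR z_neq0; rewrite negb_exists => /forallP z0.
  by apply/eqP/rowP => j; apply/eqP; rewrite mxE; apply/negPn.
have [i M_ij] := cols_M j.
rewrite ltnNge; apply/negP => wt_le1.
have z_supp l : l != j -> z 0 l = 0.
  move=> neq_lj; apply/eqP; apply: contraTT wt_le1 => z_l; rewrite -ltnNge.
  have supp2 : [set l; j] \subset [set j0 | z 0 j0 != 0].
    by apply/subsetP => l'; rewrite !inE => /orP[]/eqP->.
  by move/subset_leq_card: supp2; rewrite cards2 neq_lj.
have rowM_span : row i M \in span_code L q k n M.
  rewrite inE; apply/existsP; exists (delta_mx 0 i); rewrite rowE eqxx andbT.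
  by apply/forallP => l; rewrite mxE; case: (_ && _); rewrite ?inFq1 ?inFq0.
move/eqP/rowP/(_ 0): (z_orth _ rowM_span).
rewrite !mxE (bigD1 j) //= big1 => [|l /z_supp ->]; last by rewrite mul0r.
by rewrite addr0 !mxE => /eqP; rewrite mulf_eq0 (negbTE z_j) (negbTE M_ij).
Qed.

End Codes.

Lemma sum_indicator_mul (L : finFieldType) (T : finType) (A : {pred T}) a (h : T -> L) :
  a \in A -> \sum_(d in A) (d == a)%:R * h d = h a.
Proof.
move=> Aa; rewrite (bigD1 a) //= eqxx mul1r big1 ?addr0 // => d /andP[_ /negbTE->].
by rewrite mul0r.
Qed.

Section AugmentedTraceCode.
Variables (L : finFieldType) (q m : nat).
Hypothesis pchar_q : [pchar L].-nat q.
Local Notation tr := (trq L q m).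
Local Notation D := (Dset L q m).

Lemma row_G2_in_CDbar alpha i : row i (G2 L q m alpha) \in CDbar L q m.
Proof.
rewrite inE; apply/existsP.
exists (if (i : nat) == 0%N then 0 else if (i : nat) == 1%N then 1
        else if (i : nat) == 2%N then alpha else alpha ^+ i.-1).
apply/existsP; exists (if ((i : nat) == 0%N) || ((i : nat) == 2%N) then 1 else 0).
apply/andP; split; first by case: ifP; rewrite ?inFq1 ?inFq0_pchar.
apply/eqP/rowP => j; rewrite !mxE.
by case: i => [[|[|[|i]]] ?] /=; rewrite ?mul0r ?trq0 ?add0r ?mul1r ?addr0.
Qed.

Lemma G2_ext_col_neq0 alpha j : exists i, row_mx 1%:M (G2 L q m alpha) i j != 0.
Proof.
rewrite -(splitK j); case: (split j) => j' /=.
- by exists j'; rewrite row_mxEl mxE eqxx oner_eq0.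
- by exists 0; rewrite row_mxEr mxE oner_eq0.
Qed.

Lemma CDbar_dual_wt3 x : x != - x -> tr (x ^+ 2) = 0 ->
  exists2 y, y \in dualq L q _ (CDbar L q m) & (y != 0) && (wt L _ y <= 3)%N.
Proof.
move=> neq_x_oppx trx2.
have x_neq0 : x != 0 by apply: contra_neq neq_x_oppx => ->; rewrite oppr0.
have D0 : 0 \in D by rewrite inE expr2 mulr0 trq0.
have Dx : x \in D by rewrite inE trx2.
have Dxn : - x \in D by rewrite inE sqrrN trx2.
pose f d : L := (d == x)%:R + (d == - x)%:R - (d == 0)%:R *+ 2.
have f_sum h : \sum_(d in D) f d * h d = h x + h (- x) - h 0 *+ 2.
  under eq_bigr do rewrite mulrBl mulrDl mulrnAl.
  by rewrite sumrB big_split sumrMnl /= !sum_indicator_mul.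
exists (\row_j f (dj L q m j)).
  rewrite inE; apply/andP; split.
    by apply/forallP => j; rewrite mxE /f mulr2n inFqD ?inFqN ?inFqD ?inFq_nat.
  apply/forall_inP => c; rewrite inE => /existsP[b /existsP[c0 /andP[_ /eqP->]]].
  apply/eqP/rowP => k; rewrite !mxE; under eq_bigr do rewrite !mxE.
  rewrite -(big_enum_val (fun d => f d * (tr (b * d) + c0))) f_sum.
  rewrite /= mulr0 mulrN (trqN pchar_q) (trq0 pchar_q) add0r addrACA subrr add0r.
  by rewrite mulr2n subrr.
apply/andP; split.
  apply/eqP => /rowP/(_ (enum_rank_in Dx x)); rewrite !mxE /dj enum_rankK_in //.
  rewrite /f eqxx (negbTE neq_x_oppx) (negbTE x_neq0).
  by rewrite mul0rn subr0 addr0 => /eqP; rewrite oner_eq0.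
rewrite /wt -(card_imset _ (@enum_val_inj L (mem D))).
apply: leq_trans (subset_leq_card (_ : _ \subset [:: 0; x; - x])) (card_size _).
apply/subsetP => d /imsetP[j]; rewrite inE mxE => f_neq0 ->.
apply: contraR f_neq0; rewrite /f /dj !inE => /norP[/negbTE-> /norP[/negbTE-> /negbTE->]].
by rewrite mul0rn subr0 addr0.
Qed.

End AugmentedTraceCode.

Unset Implicit Arguments.
Set Strict Implicit.

Theorem theorem3p20 (p e m : nat) (L : finFieldType) (alpha : L) :
  prime p -> odd p -> (0 < e)%N -> (3 <= m)%N -> odd m ->
  #|L| = ((p ^ e) ^ m)%N ->
  (#|L|.-1).-primitive_root alpha ->
  let q := (p ^ e)%N in
  let dC := mindist L _ (dualq L q _ (CDbar L q m)) in
  let dC' := mindist L _ (dualq L q _ (span_code L q _ _ (row_mx 1%:M (G2 L q m alpha)))) in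
  (dC' <= dC <= dC'.+1)%N.
Proof.
move=> p_prime odd_p e_gt0 m_ge3 odd_m cardL alpha_prim; cbv zeta.
set q := (p ^ e)%N; set dC := mindist _ _ (dualq _ _ _ (CDbar L q m)).
set dC' := mindist _ _ _.
have pcharLp : p \in [pchar L] by apply: (card_finPcharP (n := (e * m)%N)); rewrite // expnM.
have pchar_q : [pchar L].-nat q := pchar_nat_pexp e pcharLp.
have q_gt1 : (1 < q)%N by rewrite -[1%N](expn0 p) ltn_exp2l ?prime_gt1.
have odd_q : odd q by rewrite oddX odd_p orbT.
have [x x_neq0 trx2] :=
  exists_trq_sqr_eq0 pchar_q q_gt1 odd_q (ltnW m_ge3) odd_m cardL alpha_prim.
have [y yC /andP[y_neq0 wt_y]] :=
  CDbar_dual_wt3 pchar_q (neq_opp_odd_pchar pcharLp odd_p x_neq0) trx2.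
have dC'_le_dC : (dC' <= dC)%N :=
  mindist_dualq_row_mx0_le (ltnW q_gt1) 1%:M (row_G2_in_CDbar pchar_q alpha) yC y_neq0.
have dC_le3 : (dC <= 3)%N := leq_trans (mindist_le_wt yC y_neq0) wt_y.
have dC'_gt1 : (1 < dC')%N.
  apply: leq_mindist => [|z zC' z_neq0].
    by rewrite addSn ltnS ltn_addr // (leq_trans _ m_ge3).
  exact: (dualq_span_wt_gt1 (ltnW q_gt1) (G2_ext_col_neq0 alpha) zC' z_neq0).
by rewrite dC'_le_dC (leq_trans dC_le3) // ltnS.
Qed.
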